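(* In a combinatorial auction where all bidders other than $i$ play piecewise constant strategies, every cell of bidder $i$'s action space is a convex polytope.
   Context: A combinatorial auction sells goods $M$ to bidders $N$; each bidder $i$ bids a vector $b_i\in\mathbb{R}_{\ge0}^r$ on his $r$ bundles of interest (other bundles bid $0$). An allocation gives each bidder one bundle of interest or $\emptyset$, pairwise disjoint; $X(b)$ is the set of allocations maximizing reported welfare $\sum_i b_i(x_i)$. Bidders' valuations are independent random variables $V_j$ and strategies $s_j$ map valuations to bids; piecewise constant means finitely many values, so $b_{-i}=s_{-i}(V_{-i})$ has finite support. A cell of bidder $i$'s action space $\mathbb{R}_{\ge0}^r$ is a maximal (with respect to inclusion) connected region $S$ such that for every $b_{-i}$ with positive probability there exists an allocation $x$ with $x\in X(b_i,b_{-i})$ for all $b_i\in S$. *)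

From HB Require Import structures.
From mathcomp Require Import all_boot all_order all_algebra.
From mathcomp Require Import all_classical all_reals all_analysis.
Set Implicit Arguments. Unset Strict Implicit. Unset Printing Implicit Defensive.
Import Order.TTheory GRing.Theory Num.Theory.
Import numFieldNormedType.Exports.
Local Open Scope classical_set_scope.
Local Open Scope ring_scope.

(* A bid of a bidder is a row vector 'rV[R]_r
   (entry k = bid on bundle k; all other bundles are bid 0). *)

Section Auction.
Variables (R : realType) (N M : finType) (r : nat).
Variable bundle : N -> 'I_r -> {set M}.

(* an allocation gives each bidder one bundle of interest (Some k) or the
   empty bundle (None) *)
Definition allocation := N -> option 'I_r.

Definition alloc_set (o : option 'I_r) (j : N) : {set M} :=
  match o with Some k => bundle j k | None => finset.set0 end.

Definition feasible (x : allocation) : Prop :=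
  forall j j' : N, j != j' -> (alloc_set (x j) j :&: alloc_set (x j') j')%SET = finset.set0.

Definition bid_value (bj : 'rV[R]_r) (o : option 'I_r) : R :=
  match o with Some k => bj 0 k | None => 0 end.

Definition welfare (b : N -> 'rV[R]_r) (x : allocation) : R :=
  \sum_(j : N) bid_value (b j) (x j).

Definition optimal (b : N -> 'rV[R]_r) (x : allocation) : Prop :=
  feasible x /\ forall y, feasible y -> welfare b y <= welfare b x.

Definition upd (b : N -> 'rV[R]_r) (i : N) (bi : 'rV[R]_r) : N -> 'rV[R]_r :=
  fun j => if j == i then bi else b j.

Definition nonneg_bid (v : 'rV[R]_r) : Prop := forall k, 0 <= v 0 k.

Definition action_space : set 'rV[R]_r := [set v | nonneg_bid v].

(* supp j = the (finite) set of bids that bidder j places with positive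
   probability; b_{-i} has positive probability iff b j \in supp j for j <> i *)
Definition pos_prob (supp : N -> seq 'rV[R]_r) (i : N) (b : N -> 'rV[R]_r) : Prop :=
  forall j, j != i -> b j \in supp j.

Definition common_alloc_region (supp : N -> seq 'rV[R]_r) (i : N)
    (S : set 'rV[R]_r) : Prop :=
  S `<=` action_space /\
  forall b, pos_prob supp i b ->
    exists x : allocation, forall bi, S bi -> optimal (upd b i bi) x.

Definition is_cell (supp : N -> seq 'rV[R]_r) (i : N) (S : set 'rV[R]_r) : Prop :=
  connected S /\ common_alloc_region supp i S /\
  forall T, connected T -> common_alloc_region supp i T -> S `<=` T -> T = S.

Definition convex_polytope (S : set 'rV[R]_r) : Prop :=
  exists H : seq ('rV[R]_r * R),
    S = [set v | forall h, h \in H -> \sum_(k < r) h.1 0 k * v 0 k <= h.2].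

End Auction.

From HB Require Import structures.
From mathcomp Require Import all_boot all_order all_algebra.
From mathcomp Require Import all_classical all_reals all_analysis.
From mathcomp Require Import ring lra.
Import Order.TTheory GRing.Theory Num.Theory.
Import numFieldNormedType.Exports.
Set Implicit Arguments. Unset Strict Implicit. Unset Printing Implicit Defensive.
Local Open Scope classical_set_scope.
Local Open Scope ring_scope.

(* For every profile [b_{-i}] of positive probability fix an allocation [x_b]
   that is optimal throughout the cell [S] against [b_{-i}] (feasible, since
   maximality forces [S] to be nonempty).  The bids [v >= 0] for which every
   [x_b] stays optimal are cut out by the finitely many linear inequalities
   [welfare (v, b_{-i}) y <= welfare (v, b_{-i}) x_b], [y] feasible, so they
   form a convex polytope; it is connected, contains [S] and has a common
   optimal allocation for each [b_{-i}], so by maximality it is [S]. *)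

Section SegmentClosed.
Variables (R : realType) (V : normedModType R).

Definition segment_closed (P : set V) :=
  forall p q t, P p -> P q -> 0 <= t <= 1 -> P (p + t *: (q - p)).

Lemma segment_closed_connected (P : set V) : segment_closed P -> connected P.
Proof.
move=> segP; have [[p0 Pp0]|/forallNP P0] := pselect (exists p, P p); last first.
  have -> : P = set0 by apply/seteqP; split=> x // /P0.
  exact: connected0.
pose seg q := (fun t : R => p0 + t *: (q - p0)) @` `[0, 1].
have -> : P = \bigcup_(q in P) seg q.
  apply/seteqP; split=> [x Px|x [q Pq [t]]]; last first.
    by rewrite /= in_itv /= => t01 <-; exact: segP.
  exists x => //; exists 1; first by rewrite /= in_itv /= lexx ler01.
  by rewrite scale1r addrC subrK.
apply: bigcup_connected => [|q _].
  exists p0 => q _; exists 0; first by rewrite /= in_itv /= lexx ler01.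
  by rewrite scale0r addr0.
apply: connected_continuous_connected; first exact: segment_connected.
apply: continuous_subspaceT => t; apply: cvgD; first exact: cvg_cst.
by apply: cvgZ; [exact: cvg_id | exact: cvg_cst].
Qed.

End SegmentClosed.

Section Polyhedra.
Variables (R : realType) (r : nat).
Implicit Types (S T : set 'rV[R]_r) (H : seq ('rV[R]_r * R)).

Definition polyhedron H : set 'rV[R]_r :=
  [set v | forall h, h \in H -> \sum_(k < r) h.1 0 k * v 0 k <= h.2].

Lemma polyhedron_segment_closed H : segment_closed (polyhedron H).
Proof.
move=> p q t Pp Pq /andP [t0 t1] h hH.
have -> : \sum_k h.1 0 k * (p + t *: (q - p)) 0 k =
    (1 - t) * \sum_k h.1 0 k * p 0 k + t * \sum_k h.1 0 k * q 0 k.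
  by rewrite !mulr_sumr -big_split /=; apply: eq_bigr => k _; rewrite !mxE; ring.
have t1' : 0 <= 1 - t by rewrite subr_ge0.
have := ler_wpM2l t0 (Pq h hH); have := ler_wpM2l t1' (Pp h hH).
lra.
Qed.

Lemma convex_polytope_connected S : convex_polytope S -> connected S.
Proof.
by move=> [H ->]; exact/segment_closed_connected/polyhedron_segment_closed.
Qed.

Lemma convex_polytope_halfspace (a : 'rV[R]_r) (c : R) :
  convex_polytope [set v | \sum_(k < r) a 0 k * v 0 k <= c].
Proof.
exists [:: (a, c)]; apply/seteqP; split=> v /= hv; last exact: hv (mem_head _ _).
by move=> h; rewrite inE => /eqP ->.
Qed.

Lemma convex_polytopeI S T :
  convex_polytope S -> convex_polytope T -> convex_polytope (S `&` T).
Proof.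
move=> [H ->] [H' ->]; exists (H ++ H'); apply/seteqP; split=> v /=.
  by move=> [hH hH'] h; rewrite mem_cat => /orP [/hH | /hH'].
by move=> hv; split=> h hh; apply: hv; rewrite mem_cat hh ?orbT.
Qed.

Lemma convex_polytope_bigcap (I : finType) (A : set I) (P : I -> set 'rV[R]_r) :
  (forall k, A k -> convex_polytope (P k)) ->
  convex_polytope (\bigcap_(k in A) P k).
Proof.
move=> PP; have /choice [H HP] : forall k, exists H, A k -> P k = polyhedron H.
  move=> k; have [/PP [H ->]|nAk] := pselect (A k); first by exists H.
  by exists [::] => /nAk.
exists (flatten [seq H k | k in A]); apply/seteqP; split=> v /=.
  move=> Pv h /flatten_mapP [k]; rewrite mem_enum => /set_mem Ak.
  by move: (Pv k Ak); rewrite HP // => /[apply].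
move=> Hv k Ak; rewrite HP // => h hk; apply: Hv.
by apply/flatten_mapP; exists k; rewrite ?mem_enum ?inE.
Qed.

Lemma sum_delta_mul (k : 'I_r) (v : 'rV[R]_r) :
  \sum_(k' < r) ('e_k : 'rV[R]_r) 0 k' * v 0 k' = v 0 k.
Proof.
rewrite (bigD1 k) //= big1 => [|k' nk]; rewrite mxE eqxx /=.
  by rewrite eqxx mul1r addr0.
by rewrite (negbTE nk) mul0r.
Qed.

Lemma convex_polytope_coord_ge0 (k : 'I_r) :
  convex_polytope [set v : 'rV[R]_r | 0 <= v 0 k].
Proof.
have -> : [set v : 'rV[R]_r | 0 <= v 0 k] =
          [set v | \sum_k' (- 'e_k : 'rV[R]_r) 0 k' * v 0 k' <= 0].
  have sumE (v : 'rV[R]_r) : \sum_k' (- 'e_k : 'rV[R]_r) 0 k' * v 0 k' = - v 0 k.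
    rewrite -(sum_delta_mul k v) -sumrN.
    by apply: eq_bigr => k' _; rewrite mxE mulNr.
  by apply/seteqP; split=> v /=; rewrite sumE oppr_le0.
exact: convex_polytope_halfspace.
Qed.

Lemma convex_polytope_action_space : convex_polytope (@action_space R r).
Proof.
rewrite (_ : @action_space R r = \bigcap_(k in setT) [set v | 0 <= v 0 k]).
  by apply: convex_polytope_bigcap => k _; exact: convex_polytope_coord_ge0.
by apply/seteqP; split=> v hv k *; exact: hv.
Qed.

End Polyhedra.

Section Auction.
Variables (R : realType) (N M : finType) (r : nat) (bundle : N -> 'I_r -> {set M}).
Variable i : N.
Implicit Types (b : N -> 'rV[R]_r) (v : 'rV[R]_r) (x y : allocation N r).

Definition alloc_vec (o : option 'I_r) : 'rV[R]_r :=
  if o is Some k then 'e_k else 0.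

Lemma bid_valueE v o : bid_value v o = \sum_k alloc_vec o 0 k * v 0 k.
Proof.
case: o => [k|] /=; first by rewrite sum_delta_mul.
by rewrite big1 // => k _; rewrite mxE mul0r.
Qed.

Lemma welfare_upd b v y :
  welfare (upd b i v) y =
    bid_value v (y i) + \sum_(j | j != i) bid_value (b j) (y j).
Proof.
rewrite /welfare (bigD1 i) //= /upd eqxx; congr (_ + _).
by apply: eq_bigr => j /negbTE ->.
Qed.

Lemma upd_eq_off b b' v : (forall j, j != i -> b' j = b j) -> upd b' i v = upd b i v.
Proof.
by move=> bb'; apply: funext => j; rewrite /upd; case: eqP => // /eqP /bb'.
Qed.

Lemma convex_polytope_welfare_le b x y :
  convex_polytope [set v | welfare (upd b i v) y <= welfare (upd b i v) x].
Proof.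
pose rest z := \sum_(j | j != i) bid_value (b j) (z j).
pose a := alloc_vec (y i) - alloc_vec (x i).
have sumB v : \sum_k a 0 k * v 0 k =
    \sum_k alloc_vec (y i) 0 k * v 0 k - \sum_k alloc_vec (x i) 0 k * v 0 k.
  by rewrite -sumrB; apply: eq_bigr => k _; rewrite !mxE mulrBl.
have -> : [set v | welfare (upd b i v) y <= welfare (upd b i v) x] =
          [set v | \sum_k a 0 k * v 0 k <= rest x - rest y].
  apply/seteqP; split=> v /=;
  by rewrite !welfare_upd !bid_valueE sumB -/(rest x) -/(rest y) => ?; lra.
exact: convex_polytope_halfspace.
Qed.

Definition optimal_region b x : set 'rV[R]_r :=
  [set v | forall y, feasible bundle y ->
             welfare (upd b i v) y <= welfare (upd b i v) x].

Lemma convex_polytope_optimal_region b x : convex_polytope (optimal_region b x).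
Proof.
have -> : optimal_region b x = \bigcap_(y in [set y : {ffun N -> option 'I_r} |
                                 feasible bundle y])
            [set v | welfare (upd b i v) y <= welfare (upd b i v) x].
  apply/seteqP; split=> v opt y fy; first exact: opt.
  have ey : y = [ffun j => y j] by apply: funext => j; rewrite ffunE.
  by rewrite ey; apply: opt; rewrite /= -ey.
by apply: convex_polytope_bigcap => y _; exact: convex_polytope_welfare_le.
Qed.

Lemma optimal_exists b : exists x, optimal bundle b x.
Proof.
pose feasibleb (f : {ffun N -> option 'I_r}) := `[< feasible bundle f >].
have feasible_None : feasibleb [ffun => None].
  by apply/asboolP => j j' _; rewrite !ffunE finset.set0I.
have [f /asboolP ff fmax] :=
  arg_maxP (fun f : {ffun N -> option 'I_r} => welfare b f) feasible_None.
exists f; split=> // y fy.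
have ey : y = [ffun j => y j] by apply: funext => j; rewrite ffunE.
by rewrite ey; apply: fmax; apply/asboolP; rewrite -ey.
Qed.

End Auction.

Section Cells.
Variables (R : realType) (N M : finType) (r : nat) (bundle : N -> 'I_r -> {set M}).
Variables (supp : N -> seq 'rV[R]_r) (i : N).

Let n := (\max_(j : N) size (supp j)).+1.

(* Profiles of the other bidders, by indices into their supports; the entry
   at [i] and out-of-range indices (junk bid [0]) are irrelevant. *)
Definition profile (f : {ffun N -> 'I_n}) (j : N) : 'rV[R]_r := nth 0 (supp j) (f j).

Lemma pos_prob_profile b : pos_prob supp i b ->
  exists f, forall j, j != i -> profile f j = b j.
Proof.
move=> pb; exists [ffun j => inord (index (b j) (supp j))] => j ji.
have bj := pb j ji; rewrite /profile ffunE inordK ?nth_index //.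
by rewrite ltnS (leq_trans _ (leq_bigmax j)) // ltnW // index_mem.
Qed.

Lemma cell_nonempty S : is_cell bundle supp i S -> exists v, S v.
Proof.
move=> [_ [_ maxS]]; apply: contrapT => /forallNP S0.
have zero_region : common_alloc_region bundle supp i [set 0].
  split=> [v -> k|b _]; first by rewrite mxE.
  by have [x optx] := optimal_exists bundle (upd b i 0); exists x => v ->.
have S_sub0 : S `<=` [set 0] by move=> v /S0.
have zero_connected : connected [set 0 : 'rV[R]_r] by exact: connected1.
by apply: (S0 0); rewrite -(maxS _ zero_connected zero_region S_sub0).
Qed.

Lemma common_alloc_region_polytope S :
  common_alloc_region bundle supp i S -> (exists v, S v) ->
  exists P, [/\ convex_polytope P, common_alloc_region bundle supp i P & S `<=` P].
Proof.
move=> [SA HS] [s0 Ss0].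
have /choice [xb xbP] : forall b, exists x : allocation N r, pos_prob supp i b ->
    forall v, S v -> optimal bundle (upd b i v) x.
  move=> b; have [/HS [x xP]|npb] := pselect (pos_prob supp i b); first by exists x.
  by exists (fun=> None) => /npb.
pose P := @action_space R r `&` \bigcap_(f in [set f | pos_prob supp i (profile f)])
            optimal_region bundle i (profile f) (xb (profile f)).
exists P; split.
- apply: convex_polytopeI; first exact: convex_polytope_action_space.
  by apply: convex_polytope_bigcap => f _; exact: convex_polytope_optimal_region.
- split=> [v [] //|b pb].
  have [f bf] := pos_prob_profile pb.
  have pf : pos_prob supp i (profile f) by move=> j ji; rewrite bf //; exact: pb.
  exists (xb (profile f)) => v [_ Pv]; rewrite -(upd_eq_off _ bf).
  by split; [exact: (xbP _ pf s0 Ss0).1 | exact: Pv].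
- by move=> v Sv; split; [exact: SA | move=> f pf; exact: (xbP _ pf v Sv).2].
Qed.

End Cells.

Theorem lemma2 (R : realType) (N M : finType) (r : nat)
    (bundle : N -> 'I_r -> {set M})
    (supp : N -> seq 'rV[R]_r) (i : N)
    (supp_nonempty : forall j, j != i -> supp j != [::])
    (supp_nonneg : forall j v, j != i -> v \in supp j -> nonneg_bid v)
    (S : set 'rV[R]_r) :
  is_cell bundle supp i S -> convex_polytope S.
Proof.
move=> cellS; have [_ [SR maxS]] := cellS.
have [P [PP PR SP]] := common_alloc_region_polytope SR (cell_nonempty cellS).
by rewrite -(maxS P (convex_polytope_connected PP) PR SP).
Qed.
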